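(* Let $k\ge0$, let $\eta$ be an $\mathbb S^{2^k}$-invariant Borel probability measure on $I^{\mathbb Z}$, and suppose $D_k[\eta]$ is ergodic with respect to $\mathbb S\times\mathbb O$. Then for every $n>k$, the number $\varrho_n=e^{2\pi i/2^n}$ is not an eigenvalue of $\mathbb S$ (of the operator $f\mapsto f\circ\mathbb S$) on $L^2(I^{\mathbb Z},\theta_0[D_k[\eta]])$.
   Context: $I=\{0,1\}$. $\mathbb S$ is the left shift on $I^{\mathbb Z}$; $\mathbb S^j\eta$ denotes pushforward. $I^{\mathbb N}$ is the space of $0$–$1$ sequences $(\alpha_i)_{i\ge1}$ with uniform Bernoulli measure $m$; $\mathbb O$ is the odometer (if $\alpha_1=\dots=\alpha_{n-1}=1$, $\alpha_n=0$, then $\mathbb O[\alpha]_i=0$ for $i<n$, $\mathbb O[\alpha]_n=1$, $\mathbb O[\alpha]_i=\alpha_i$ for $i>n$). $A_{r,k}=\{\alpha:\sum_{i=1}^k\alpha_i2^{i-1}=r\}$. $D_k[\eta]=\sum_{i=0}^{2^k-1}\mathbb S^i\eta\times(\chi_{A_{i,k}}m)$. $\theta_0[\nu]$ denotes the projection of a measure $\nu$ on $I^{\mathbb Z}\times I^{\mathbb N}$ to $I^{\mathbb Z}$; thus $\theta_0[D_k[\eta]]=2^{-k}\sum_{i=0}^{2^k-1}\mathbb S^i\eta$. *)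

From HB Require Import structures.
From mathcomp Require Import all_boot all_order all_algebra.
From mathcomp Require Import all_classical all_reals all_analysis.

Set Implicit Arguments.
Unset Strict Implicit.
Unset Printing Implicit Defensive.
Import Order.TTheory GRing.Theory Num.Theory.
Local Open Scope classical_set_scope.
Local Open Scope ring_scope.

(* Cylinder generators of the product sigma-algebra on I^Z
   (= Borel sigma-algebra of the product topology). *)
Definition cylZ : set (set (int -> bool)) :=
  [set A | exists (i : int) (b : bool), A = [set x | x i = b]].
Definition IZ := g_sigma_algebraType cylZ.

(* I^N: sequences (alpha_i)_{i>=1}; we index them from 0, so that
   a i stands for alpha_{i+1}. *)
Definition cylN : set (set (nat -> bool)) :=
  [set A | exists (i : nat) (b : bool), A = [set x | x i = b]].
Definition IN := g_sigma_algebraType cylN.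

Definition bshift (x : IZ) : IZ := fun i => x (i + 1).

(* odometer O ("add one with carry"):
   coordinate i flips iff all previous coordinates are 1.
   For alpha_1 = .. = alpha_{n-1} = 1, alpha_n = 0 this gives exactly
   O[alpha]_i = 0 (i<n), O[alpha]_n = 1, O[alpha]_i = alpha_i (i>n);
   the (null) all-ones sequence is sent to the all-zeros sequence. *)
Definition odometer (a : IN) : IN :=
  fun i => if [forall j : 'I_i, a j] then ~~ a i else a i.

Definition A_set (r k : nat) : set IN :=
  [set a : IN | (\sum_(i < k) (a i : nat) * 2 ^ i)%N = r].

Definition is_uniform_bernoulli (R : realType) (m : set IN -> \bar R) :=
  forall (n : nat) (s : 'I_n -> bool),
    m [set a : IN | forall i : 'I_n, a i = s i] = ((2 ^- n)%:E)%E.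

Definition shift_push (R : realType) (eta : set IZ -> \bar R) (j : nat) :
  set IZ -> \bar R := pushforward eta (iter j bshift).

Definition restr_measure (R : realType) (m : set IN -> \bar R) (A : set IN) :
  set IN -> \bar R := fun X => m (X `&` A).

Definition D_meas (R : realType) (m : set IN -> \bar R) (k : nat)
  (eta : set IZ -> \bar R) : set (IZ * IN) -> \bar R :=
  fun E => (\sum_(i < 2 ^ k)
     ((shift_push eta i) \x (restr_measure m (A_set i k))) E)%E.

Definition theta0 (R : realType) (nu : set (IZ * IN) -> \bar R) :
  set IZ -> \bar R := pushforward nu fst.

Definition SxO (p : IZ * IN) : IZ * IN := (bshift p.1, odometer p.2).

Definition ergodic d (X : measurableType d) (R : realType)
  (nu : set X -> \bar R) (T : X -> X) : Prop :=
  (forall E, measurable E -> nu (T @^-1` E) = nu E) /\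
  (forall E, measurable E -> T @^-1` E = E -> nu E = 0%E \/ nu (~` E) = 0%E).

(* c is an eigenvalue, c = cr + i ci, of the Koopman operator f |-> f o T
   on the complex space L^2(X, mu); a complex function f is represented by
   its real and imaginary parts (u, v). *)
Definition L2_eigenvalue d (X : measurableType d) (R : realType)
  (mu : set X -> \bar R) (T : X -> X) (cr ci : R) : Prop :=
  exists u v : X -> R,
    [/\ measurable_fun setT u, measurable_fun setT v,
        (\int[mu]_x ((u x) ^+ 2 + (v x) ^+ 2)%:E < +oo)%E,
        ~ {ae mu, forall x, u x = 0 /\ v x = 0} &
        {ae mu, forall x, u (T x) = cr * u x - ci * v x /\
                          v (T x) = ci * u x + cr * v x}].

(* Let f = u + iv satisfy f o S = e^(2 pi i/2^n) f almost everywhere, with n > k,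
   and let r_n(alpha) = sum_(i<n) alpha_(i+1) 2^i.  The odometer adds 1 to r_n
   modulo 2^n, so F(x, alpha) = f(x) e^(-2 pi i r_n(alpha)/2^n) is invariant under
   S x O on the set of points whose whole S-orbit satisfies the eigenvalue equation;
   that set is S-invariant and of full measure.  By ergodicity of D_k[eta], the sets
   where Re F (resp. Im F) is positive, or negative, are null or conull.  Flipping
   the digit alpha_n changes F into -F and preserves D_k[eta], because the Bernoulli
   measure is invariant under it and the sets A_(i,k) do not depend on it; hence
   those sets have equal measure, are all null, and f = 0 almost everywhere. *)

From HB Require Import structures.
From mathcomp Require Import all_boot all_order all_algebra.
From mathcomp Require Import all_classical all_reals all_analysis.
From mathcomp Require Import ring lra.
Set Implicit Arguments.
Unset Strict Implicit.
Unset Printing Implicit Defensive.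
Import Order.TTheory GRing.Theory Num.Theory.
Local Open Scope classical_set_scope.
Local Open Scope ring_scope.

(** * Shifts of I^Z and null sets saturated under them *)

Definition shiftZ (j : int) (x : IZ) : IZ := fun i => x (i + j).

Lemma shiftZD a b x : shiftZ a (shiftZ b x) = shiftZ (a + b) x.
Proof. by apply/funext => i; rewrite /shiftZ addrA. Qed.

Lemma shiftZ0 x : shiftZ 0 x = x.
Proof. by apply/funext => i; rewrite /shiftZ addr0. Qed.

Lemma preimage_shiftZD a b (B : set IZ) :
  shiftZ b @^-1` (shiftZ a @^-1` B) = shiftZ (a + b) @^-1` B.
Proof. by apply/seteqP; split=> x; rewrite /= shiftZD. Qed.

Lemma preimage_shiftZ0 (B : set IZ) : shiftZ 0 @^-1` B = B.
Proof. by apply/seteqP; split=> x; rewrite /= shiftZ0. Qed.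

Lemma measurable_shiftZ j : measurable_fun setT (shiftZ j).
Proof.
apply: (@measurability _ _ _ _ setT (shiftZ j) cylZ) => //.
move=> _ [A [i [b ->]] <-]; rewrite setTI.
by apply: sub_sigma_algebra; exists (i + j), b.
Qed.

Lemma measurable_preimage_shiftZ j (B : set IZ) :
  measurable B -> measurable (shiftZ j @^-1` B).
Proof. by move=> mB; rewrite -[X in measurable X]setTI; exact: measurable_shiftZ. Qed.

Lemma measurable_iter_bshift j : measurable_fun setT (iter j bshift).
Proof.
elim: j => [|j ih] /=; first exact: measurable_id.
exact: measurableT_comp (measurable_shiftZ 1) ih.
Qed.

Section bshift_invariant_measure.
Context (R : realType) (nu : {measure set IZ -> \bar R}).
Hypothesis nu_bshift : forall B, measurable B -> nu (bshift @^-1` B) = nu B.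

Lemma measure_preimage_shiftZ j B : measurable B -> nu (shiftZ j @^-1` B) = nu B.
Proof.
have shift_nat p B' : measurable B' -> nu (shiftZ (Posz p) @^-1` B') = nu B'.
  elim: p B' => [|p ih] B' mB'; first by rewrite preimage_shiftZ0.
  rewrite -addn1 PoszD -preimage_shiftZD nu_bshift ?ih //.
  exact: measurable_preimage_shiftZ.
move=> mB; case: j => p; first exact: shift_nat.
have mB' := measurable_preimage_shiftZ (Negz p) mB.
by rewrite -(shift_nat p.+1 _ mB') preimage_shiftZD NegzE addNr preimage_shiftZ0.
Qed.

Definition shift_saturation (N : set IZ) : set IZ :=
  [set x | exists j : int, N (shiftZ j x)].

Lemma shift_saturationE N : shift_saturation N =
  \bigcup_p (shiftZ (Posz p) @^-1` N `|` shiftZ (Negz p) @^-1` N).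
Proof.
apply/seteqP; split=> x /=; last by move=> [p _ [h|h]]; eexists; exact: h.
by move=> [[] p h]; exists p => //; [left | right].
Qed.

Lemma measurable_shift_saturation N : measurable N -> measurable (shift_saturation N).
Proof.
move=> mN; rewrite shift_saturationE; apply: bigcupT_measurable => p.
by apply: measurableU; exact: measurable_preimage_shiftZ.
Qed.

Lemma shift_saturation_null N : measurable N -> nu N = 0%E ->
  nu (shift_saturation N) = 0%E.
Proof.
move=> mN N0; apply/(negligibleP _ (measurable_shift_saturation mN)).
have shift_null j : nu.-negligible (shiftZ j @^-1` N).
  apply/(negligibleP _ (measurable_preimage_shiftZ j mN)).
  by rewrite -N0; exact: measure_preimage_shiftZ.
by rewrite shift_saturationE; apply: negligible_bigcup => p; exact: negligibleU.
Qed.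

End bshift_invariant_measure.

Lemma sub_shift_saturation N : N `<=` shift_saturation N.
Proof. by move=> x Nx; exists 0; rewrite shiftZ0. Qed.

Lemma preimage_bshift_saturation N :
  bshift @^-1` shift_saturation N = shift_saturation N.
Proof.
apply/seteqP; split=> x [j Nj]; first by exists (j + 1); rewrite -shiftZD.
by exists (j - 1); rewrite /= [bshift x]/(shiftZ 1 x) shiftZD subrK.
Qed.

(** * Sets depending on finitely many digits; the uniform Bernoulli measure *)

Definition prefix_determined (n : nat) (S : set IN) :=
  forall a b, (forall j, (j < n)%N -> a j = b j) -> S a -> S b.

Lemma prefix_determined_le n n' S :
  (n <= n')%N -> prefix_determined n S -> prefix_determined n' S.
Proof. by move=> nn' dS a b ab; apply: dS => j jn; apply: ab; exact: leq_trans nn'. Qed.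

Lemma prefix_determinedI n S S' : prefix_determined n S -> prefix_determined n S' ->
  prefix_determined n (S `&` S').
Proof.
by move=> dS dS' a b ab [Sa S'a]; split; [exact: dS ab Sa | exact: dS' ab S'a].
Qed.

Lemma prefix_determined_A_set r k : prefix_determined k (A_set r k).
Proof. by move=> a b ab; rewrite /A_set /= => <-; apply: eq_bigr => i _; rewrite ab. Qed.

Definition flip_bit (j : nat) (a : IN) : IN :=
  fun i => if i == j then ~~ a i else a i.

Lemma flip_bit_eq j a i : i != j -> flip_bit j a i = a i.
Proof. by rewrite /flip_bit => /negbTE ->. Qed.

Lemma prefix_determined_flip_bit n j S :
  prefix_determined n S -> prefix_determined n (flip_bit j @^-1` S).
Proof. by move=> dS a b ab; apply: dS => i lt_in; rewrite /flip_bit ab. Qed.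

Section prefix_cylinders.
Variable n : nat.
Implicit Types (w : {ffun 'I_n -> bool}) (W : set {ffun 'I_n -> bool}).

Definition prefix (a : IN) : {ffun 'I_n -> bool} := [ffun i : 'I_n => a i].

Definition cylinder w : set IN := [set a | forall i, a i = w i].

Definition extend w : IN := fun j => if insub j is Some i then w i else false.

Lemma extend_prefix a j : (j < n)%N -> extend (prefix a) j = a j.
Proof. by move=> jn; rewrite /extend insubT /= ffunE. Qed.

Lemma prefix_determinedE S :
  prefix_determined n S -> S = prefix @^-1` (extend @^-1` S).
Proof.
by move=> dS; apply/seteqP; split=> a /=; apply: dS => j jn; rewrite extend_prefix.
Qed.

Lemma preimage_prefix W : prefix @^-1` W = \bigcup_(w in W) cylinder w.
Proof.
apply/seteqP; split=> a /=; first by exists (prefix a) => // i; rewrite ffunE.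
by move=> [w Ww aw]; have -> : prefix a = w by apply/ffunP => i; rewrite ffunE aw.
Qed.

Lemma measurable_cylinder w : measurable (cylinder w).
Proof.
have -> : cylinder w = \bigcap_(i in [set: 'I_n]) [set a : IN | a i = w i].
  by apply/seteqP; split=> [a aw i _|a aw i]; apply: aw.
apply: fin_bigcap_measurable => [|i _]; first exact: finite_finset.
by apply: sub_sigma_algebra; exists (nat_of_ord i), (w i).
Qed.

Lemma measurable_prefix_determined S : prefix_determined n S -> measurable S.
Proof.
move=> /prefix_determinedE ->; rewrite preimage_prefix.
apply: fin_bigcup_measurable => [|w _]; first exact: finite_finset.
exact: measurable_cylinder.
Qed.

Section uniform_bernoulli.
Context (R : realType) (m : {measure set IN -> \bar R}).
Hypothesis m_unif : is_uniform_bernoulli m.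

Lemma uniform_bernoulli_prefix W :
  m (prefix @^-1` W) = (\sum_(w \in W) ((2 : R) ^- n)%:E)%E.
Proof.
rewrite preimage_prefix measure_fin_bigcup //.
- by apply: eq_fsbigr => w _; exact: m_unif.
- exact: finite_finset.
- by move=> w w' _ _ [a [aw aw']]; apply/ffunP => i; rewrite -aw -aw'.
- by move=> w _; exact: measurable_cylinder.
Qed.

Lemma uniform_bernoulli_prefix_involutive W
    (h : {ffun 'I_n -> bool} -> {ffun 'I_n -> bool}) :
  involutive h -> m (prefix @^-1` (h @^-1` W)) = m (prefix @^-1` W).
Proof.
move=> hK; rewrite !uniform_bernoulli_prefix.
have hW : h @` (h @^-1` W) = W.
  by apply/seteqP; split=> w /=; [case=> w' ? <- | exists (h w); rewrite ?hK].
by rewrite -[in RHS]hW fsbig_image // => w w' _ _; exact: (can_inj hK).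
Qed.

End uniform_bernoulli.
End prefix_cylinders.

Definition flip_word n (j : nat) (w : {ffun 'I_n -> bool}) : {ffun 'I_n -> bool} :=
  [ffun i : 'I_n => if i == j :> nat then ~~ w i else w i].

Lemma flip_wordK n j : involutive (@flip_word n j).
Proof. by move=> w; apply/ffunP => i; rewrite !ffunE; case: (_ == _); rewrite ?negbK. Qed.

Lemma uniform_bernoulli_flip_bit (R : realType) (m : {measure set IN -> \bar R}) n j S :
  is_uniform_bernoulli m -> prefix_determined n S -> m (flip_bit j @^-1` S) = m S.
Proof.
move=> m_unif dS.
rewrite [in RHS](prefix_determinedE dS).
rewrite (prefix_determinedE (prefix_determined_flip_bit (j := j) dS)).
rewrite -(uniform_bernoulli_prefix_involutive m_unif _ (@flip_wordK n j)).
congr (m _); apply/seteqP; split=> a /=; apply: dS => i lt_in;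
  by rewrite /flip_bit /extend insubT /= !ffunE; case: (_ == _); rewrite ?negbK.
Qed.

(** * The measure D_k[eta] and its symmetry under flipping a digit *)

Lemma measurable_A_set r k : measurable (A_set r k).
Proof. apply: (@measurable_prefix_determined k); exact: prefix_determined_A_set. Qed.

Lemma preimage_flip_bit_A_set r k j : (k <= j)%N ->
  flip_bit j @^-1` A_set r k = A_set r k.
Proof.
move=> kj; apply/seteqP; split=> a; apply: prefix_determined_A_set => i ik;
  by rewrite flip_bit_eq // ltn_eqF // (leq_trans ik).
Qed.

(* The measure instance of a pushforward is conditional on the measurability of
   the map; [exact:] finds that side condition in the context ([mf], [mfst]). *)
Section shift_push_measure.
Context (R : realType) (eta : {measure set IZ -> \bar R}) (j : nat).
Let mf := measurable_iter_bshift j.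
Let push0 : shift_push eta j set0 = 0%E. Proof. exact: measure0. Qed.
Let push_ge0 A : (0 <= shift_push eta j A)%E. Proof. exact: measure_ge0. Qed.
Let push_sigma_additive : semi_sigma_additive (shift_push eta j).
Proof. exact: measure_semi_sigma_additive. Qed.
HB.instance Definition _ :=
  isMeasure.Build _ _ _ (shift_push eta j) push0 push_ge0 push_sigma_additive.
End shift_push_measure.

HB.instance Definition _ (R : realType) (m : {finite_measure set IN -> \bar R}) r k :=
  FiniteMeasure.copy (restr_measure m (A_set r k)) (mrestr m (measurable_A_set r k)).

HB.instance Definition _ (R : realType) (m : {finite_measure set IN -> \bar R}) k
    (eta : {measure set IZ -> \bar R}) :=
  Measure.copy (D_meas m k eta)
    (msum (fun i => shift_push eta i \x restr_measure m (A_set i k))%E (2 ^ k)).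

Section theta0_measure.
Context (R : realType) (nu : {measure set (IZ * IN) -> \bar R}).
Let mfst := @measurable_fst _ _ IZ IN.
Let theta00 : theta0 nu set0 = 0%E. Proof. exact: measure0. Qed.
Let theta0_ge0 A : (0 <= theta0 nu A)%E. Proof. exact: measure_ge0. Qed.
Let theta0_sigma_additive : semi_sigma_additive (theta0 nu).
Proof. exact: measure_semi_sigma_additive. Qed.
HB.instance Definition _ :=
  isMeasure.Build _ _ _ (theta0 nu) theta00 theta0_ge0 theta0_sigma_additive.
End theta0_measure.

Lemma D_meas_flip_bit (R : realType) (m : {finite_measure set IN -> \bar R}) k
    (eta : {measure set IZ -> \bar R}) n j (E : set (IZ * IN)) :
  is_uniform_bernoulli m -> (k <= j)%N ->
  (forall x, prefix_determined n (xsection E x)) ->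
  D_meas m k eta ((fun z => (z.1, flip_bit j z.2)) @^-1` E) = D_meas m k eta E.
Proof.
move=> m_unif kj dE; apply: eq_bigr => i _; apply: eq_integral => x _ /=.
rewrite /restr_measure -[in LHS](preimage_flip_bit_A_set i kj).
have -> : xsection ((fun z => (z.1, flip_bit j z.2)) @^-1` E) x =
    flip_bit j @^-1` xsection E x.
  by apply/seteqP; split=> a; rewrite /xsection /= !inE.
rewrite -preimage_setI (uniform_bernoulli_flip_bit (n := maxn n k) _ m_unif) //.
apply: prefix_determinedI; first exact: (prefix_determined_le (leq_maxl n k)).
exact: (prefix_determined_le (leq_maxr n k) (@prefix_determined_A_set i k)).
Qed.

(** * Binary value and angle of the first n digits *)

Lemma measurable_coord (j : nat) : measurable_fun setT (fun a : IN => a j).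
Proof.
apply: (measurable_fun_bool true); rewrite setTI.
by apply: sub_sigma_algebra; exists j, true.
Qed.

Lemma forall_ord_recr (a : IN) n :
  [forall j : 'I_n.+1, a j] = [forall j : 'I_n, a j] && a n.
Proof.
apply/forallP/andP => [h|[/forallP h an] j].
  split; last exact: (h ord_max).
  by apply/forallP => j; exact: (h (widen_ord (leqnSn n) j)).
have [jn|nj] := ltnP j n; first exact: (h (Ordinal jn)).
by have -> : nat_of_ord j = n by apply/eqP; rewrite eqn_leq nj -ltnS ltn_ord.
Qed.

Section binary_value.
Context (R : realType).

Definition binval (n : nat) (a : IN) : R := \sum_(j < n) (a j : nat)%:R * 2 ^+ j.

Lemma binval_prefix n a b : (forall j, (j < n)%N -> a j = b j) -> binval n a = binval n b.
Proof. by move=> ab; apply: eq_bigr => j _; rewrite ab. Qed.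

Lemma measurable_binval n : measurable_fun setT (binval n).
Proof.
apply: measurable_sum => j; apply: measurable_realfun.measurable_funM => //.
have mf : measurable_fun setT (fun b : bool => (b : nat)%:R : R) by [].
exact: (measurableT_comp mf (measurable_coord j)).
Qed.

Lemma binval_odometer n a :
  binval n (odometer a) + 2 ^+ n *+ [forall j : 'I_n, a j] = binval n a + 1.
Proof.
elim: n => [|n IHn]; first by rewrite /binval !big_ord0; case: forallP => // -[] [].
rewrite /binval !big_ord_recr -/(binval n _) -/(binval n a) forall_ord_recr /=.
rewrite [odometer a n]/odometer; move: IHn; case: [forall j : 'I_n, a j] => /= IHn.
  by case: (a n); rewrite /= ?mulr1n ?mul1r ?mul0r exprS; lra.
by rewrite mulr0n addr0 in IHn; rewrite mulr0n addr0 IHn; lra.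
Qed.

Lemma binval_flip_bit n j a : (j < n)%N ->
  binval n (flip_bit j a) + 2 ^+ j.+1 *+ a j = binval n a + 2 ^+ j.
Proof.
move=> jn; rewrite /binval (bigD1 (Ordinal jn)) //= [in RHS](bigD1 (Ordinal jn)) //=.
rewrite (eq_bigr (fun i : 'I_n => (a i : nat)%:R * 2 ^+ i)) => [|i ij]; last first.
  by rewrite flip_bit_eq //; apply: contra ij => /eqP ij; apply/eqP/val_inj.
by rewrite /flip_bit eqxx exprS; case: (a j); rewrite /= ?mulr1n ?mulr0n; lra.
Qed.
End binary_value.

Section dyadic_angle.
Context (R : realType) (n : nat).

Definition dyadic_angle : R := 2 * pi / (2 ^ n)%N%:R.

Definition binangle (a : IN) : R := binval R n a * dyadic_angle.

Lemma exprn_dyadic_angle : 2 ^+ n * dyadic_angle = pi *+ 2.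
Proof.
have n2 : (2 ^+ n : R) != 0 by rewrite expf_neq0 // pnatr_eq0.
by rewrite /dyadic_angle natrX mulr2n; field.
Qed.

Lemma measurable_binangle : measurable_fun setT binangle.
Proof. by apply: measurable_realfun.measurable_funM => //; exact: measurable_binval. Qed.

Lemma binangle_prefix a b : (forall j, (j < n)%N -> a j = b j) -> binangle a = binangle b.
Proof. by move=> ab; rewrite /binangle (binval_prefix _ ab). Qed.

Lemma binangle_odometer a :
  binangle (odometer a) + pi *+ 2 *+ [forall j : 'I_n, a j] = binangle a + dyadic_angle.
Proof.
by rewrite /binangle -exprn_dyadic_angle -mulrnAl -mulrDl binval_odometer mulrDl mul1r.
Qed.

Lemma binangle_flip_bit a : (0 < n)%N ->
  binangle (flip_bit n.-1 a) + pi *+ 2 *+ a n.-1 = binangle a + pi.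
Proof.
move=> n_gt0; have half : 2 ^+ n.-1 * dyadic_angle = pi.
  have two_neq0 : (2 : R) != 0 by rewrite pnatr_eq0.
  apply: (mulfI two_neq0); rewrite mulrA -exprS prednK // exprn_dyadic_angle.
  by rewrite mulr2n mulrDl mul1r.
have expn_pred : (2 : R) ^+ n = 2 ^+ n.-1.+1 by rewrite prednK.
rewrite /binangle -exprn_dyadic_angle -mulrnAl -mulrDl expn_pred.
by rewrite binval_flip_bit ?ltn_predL // mulrDl half.
Qed.

End dyadic_angle.

Section twist.
Context (R : realType).
Implicit Types t r u v : R.

Let measurable_cos : measurable_fun setT (@cos R).
Proof. exact: measurable_realfun.continuous_measurable_fun (@continuous_cos R). Qed.

Let measurable_sin : measurable_fun setT (@sin R).
Proof. exact: measurable_realfun.continuous_measurable_fun (@continuous_sin R). Qed.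

(* Real and imaginary parts of (u + i v) e^(-i t). *)
Definition twist_re t u v := u * cos t + v * sin t.
Definition twist_im t u v := v * cos t - u * sin t.

Lemma twist_re_periodic k t u v : twist_re (t + pi *+ 2 *+ k) u v = twist_re t u v.
Proof. by rewrite /twist_re (periodicn (@cosD2pi R)) (periodicn (@sinD2pi R)). Qed.

Lemma twist_im_periodic k t u v : twist_im (t + pi *+ 2 *+ k) u v = twist_im t u v.
Proof. by rewrite /twist_im (periodicn (@cosD2pi R)) (periodicn (@sinD2pi R)). Qed.

Lemma twist_reDpi t u v : twist_re (t + pi) u v = - twist_re t u v.
Proof. by rewrite /twist_re cosDpi sinDpi; ring. Qed.

Lemma twist_imDpi t u v : twist_im (t + pi) u v = - twist_im t u v.
Proof. by rewrite /twist_im cosDpi sinDpi; ring. Qed.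

Lemma twist_re_rotate t r u v :
  twist_re (t + r) (cos r * u - sin r * v) (sin r * u + cos r * v) = twist_re t u v.
Proof.
rewrite /twist_re cosD sinD -[RHS]mulr1 -(cos2Dsin2 r); ring.
Qed.

Lemma twist_im_rotate t r u v :
  twist_im (t + r) (cos r * u - sin r * v) (sin r * u + cos r * v) = twist_im t u v.
Proof.
rewrite /twist_im cosD sinD -[RHS]mulr1 -(cos2Dsin2 r); ring.
Qed.

Lemma twist_eq0 t u v : twist_re t u v = 0 -> twist_im t u v = 0 -> u = 0 /\ v = 0.
Proof.
move=> re0 im0.
have : u ^+ 2 + v ^+ 2 = twist_re t u v ^+ 2 + twist_im t u v ^+ 2.
  by rewrite /twist_re /twist_im -[LHS]mulr1 -(cos2Dsin2 t); ring.
rewrite re0 im0 expr0n addr0 => /eqP.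
by rewrite paddr_eq0 ?sqr_ge0 // !sqrf_eq0 => /andP[/eqP -> /eqP ->].
Qed.

Lemma measurable_twist_re d (X : measurableType d) (f g h : X -> R) :
  measurable_fun setT f -> measurable_fun setT g -> measurable_fun setT h ->
  measurable_fun setT (fun x => twist_re (f x) (g x) (h x)).
Proof.
move=> mf mg mh.
have cos_f := measurableT_comp measurable_cos mf.
have sin_f := measurableT_comp measurable_sin mf.
by apply: measurable_realfun.measurable_funD; apply: measurable_realfun.measurable_funM.
Qed.

Lemma measurable_twist_im d (X : measurableType d) (f g h : X -> R) :
  measurable_fun setT f -> measurable_fun setT g -> measurable_fun setT h ->
  measurable_fun setT (fun x => twist_im (f x) (g x) (h x)).
Proof.
move=> mf mg mh.
have cos_f := measurableT_comp measurable_cos mf.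
have sin_f := measurableT_comp measurable_sin mf.
by apply: measurable_realfun.measurable_funB; apply: measurable_realfun.measurable_funM.
Qed.

End twist.

(** * The ergodic argument *)

Lemma ergodic_balanced_invariant_ae0 d (X : measurableType d) (R : realType)
    (mu : {measure set X -> \bar R}) (T : X -> X) (f : X -> R) :
  ergodic mu T -> measurable_fun setT f -> (forall x, f (T x) = f x) ->
  mu [set x | 0 < f x] = mu [set x | f x < 0] -> {ae mu, forall x, f x = 0}.
Proof.
move=> [_ mu_erg] mf fT balanced.
have mpos : measurable [set x | 0 < f x].
  by rewrite -[X in measurable X]setTI -(preimage_itvoy _ 0); exact: mf.
have mneg : measurable [set x | f x < 0].
  by rewrite -[X in measurable X]setTI -(preimage_itvNyo _ 0); exact: mf.
have pos0 : mu [set x | 0 < f x] = 0%E.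
  have Tpos : T @^-1` [set x | 0 < f x] = [set x | 0 < f x].
    by apply/seteqP; split=> x; rewrite /= fT.
  have [//|compl0] := mu_erg _ mpos Tpos.
  rewrite balanced; apply/eqP; rewrite -measure_le0 -compl0.
  apply: le_measure; rewrite ?inE //; first exact: measurableC.
  by move=> x /= /ltW/le_gtF ->.
exists ([set x | 0 < f x] `|` [set x | f x < 0]); split.
- exact: measurableU.
- rewrite measureU //; last by rewrite -subset0 => x [/= /lt_trans h /h]; rewrite ltxx.
  rewrite -[RHS](adde0 0%E); congr (_ + _); first exact: pos0.
  by rewrite -pos0 balanced.
- by move=> x /= /eqP; rewrite neq_lt => /orP[]; [right|left].
Qed.

Lemma D_meas_odd_invariant_ae0 (R : realType) (m : {finite_measure set IN -> \bar R}) k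
    (eta : {measure set IZ -> \bar R}) n (f : IZ * IN -> R) :
  is_uniform_bernoulli m -> ergodic (D_meas m k eta) SxO -> (k < n)%N ->
  measurable_fun setT f -> (forall z, f (SxO z) = f z) ->
  (forall x a, f (x, flip_bit n.-1 a) = - f (x, a)) ->
  (forall x a b, (forall j, (j < n)%N -> a j = b j) -> f (x, a) = f (x, b)) ->
  {ae D_meas m k eta, forall z, f z = 0}.
Proof.
move=> m_unif D_erg kn mf fT f_odd f_prefix.
apply: ergodic_balanced_invariant_ae0 D_erg mf fT _.
have -> : [set z | f z < 0] =
    (fun z => (z.1, flip_bit n.-1 z.2)) @^-1` [set z | 0 < f z].
  by apply/seteqP; split=> -[x a] /=; rewrite f_odd oppr_gt0.
symmetry; apply: (D_meas_flip_bit _ (n := n)) => //.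
  by rewrite -ltnS prednK // (leq_ltn_trans _ kn).
by move=> x a b ab; rewrite /xsection /= !inE /= (f_prefix _ _ _ ab).
Qed.

Lemma theta0_ae_fst (R : realType) (nu : {measure set (IZ * IN) -> \bar R})
    (P : set IZ) :
  measurable P -> {ae nu, forall z, P z.1} -> {ae theta0 nu, forall x, P x}.
Proof.
move=> mP ae_P; exists (~` P); split => //; first exact: measurableC.
apply: (measure_negligible _ ae_P); rewrite -[X in measurable X]setTI.
exact: measurable_fst (measurableC mP).
Qed.

Section eigenfunction.
Context (R : realType) (m : {finite_measure set IN -> \bar R}) (k : nat)
  (eta : {measure set IZ -> \bar R}) (n : nat).
Hypotheses (m_unif : is_uniform_bernoulli m) (D_erg : ergodic (D_meas m k eta) SxO)
  (kn : (k < n)%N).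
Local Notation D := (D_meas m k eta).
Local Notation c := (cos (dyadic_angle R n)).
Local Notation s := (sin (dyadic_angle R n)).

Lemma theta0_bshift B : measurable B -> theta0 D (bshift @^-1` B) = theta0 D B.
Proof.
move=> mB; apply: D_erg.1; rewrite -[X in measurable X]setTI.
exact: measurable_fst mB.
Qed.

Variables (u v : IZ -> R) (N : set IZ).
Hypotheses (mu : measurable_fun setT u) (mv : measurable_fun setT v).
Hypotheses (mN : measurable N) (N0 : theta0 D N = 0%E)
  (eigen : forall x, ~ N x ->
     u (bshift x) = c * u x - s * v x /\ v (bshift x) = s * u x + c * v x).

Let G := ~` shift_saturation N.

Let mG : measurable G.
Proof. by apply: measurableC; exact: measurable_shift_saturation. Qed.

Let indic_G_bshift x : \1_G (bshift x) = \1_G x :> R.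
Proof. by rewrite !indicE /G -[in RHS]preimage_bshift_saturation. Qed.

Let ae_G : {ae D, forall z, G z.1}.
Proof.
exists (fst @^-1` shift_saturation N); split => //.
- rewrite -[X in measurable X]setTI; apply: measurable_fst => //.
  exact: measurable_shift_saturation.
- exact: (shift_saturation_null theta0_bshift mN N0).
- by move=> z /= /contrapT.
Qed.

(* The indicator of G makes S x O-invariance hold everywhere, as ergodicity needs. *)
Definition twisted (tw : R -> R -> R -> R) (z : IZ * IN) : R :=
  \1_G z.1 * tw (binangle R n z.2) (u z.1) (v z.1).

Lemma twisted_ae0 (tw : R -> R -> R -> R) :
  measurable_fun setT (fun z => tw (binangle R n z.2) (u z.1) (v z.1)) ->
  (forall j t u v, tw (t + pi *+ 2 *+ j) u v = tw t u v) ->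
  (forall t u v, tw (t + pi) u v = - tw t u v) ->
  (forall t r u v,
     tw (t + r) (cos r * u - sin r * v) (sin r * u + cos r * v) = tw t u v) ->
  {ae D, forall z, twisted tw z = 0}.
Proof.
move=> mtw tw_periodic tw_Dpi tw_rotate.
apply: (@D_meas_odd_invariant_ae0 _ _ _ _ n) => //.
- apply: measurable_realfun.measurable_funM mtw.
  exact: measurableT_comp (measurable_realfun.measurable_indic _) measurable_fst.
- move=> [x a]; rewrite /twisted /= indic_G_bshift.
  have [Gx|nGx] := pselect (G x); last by rewrite indicE memNset ?mul0r.
  have [-> ->] := eigen (fun Nx => Gx (sub_shift_saturation Nx)).
  by rewrite -(tw_periodic [forall j : 'I_n, a j]) binangle_odometer tw_rotate.
- move=> x a; rewrite /twisted /= -(tw_periodic (a n.-1)) binangle_flip_bit.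
    by rewrite tw_Dpi mulrN.
  exact: leq_ltn_trans (leq0n k) kn.
- by move=> x a b ab; rewrite /twisted /= (binangle_prefix _ ab).
Qed.

Lemma eigenfunction_ae0 : {ae theta0 D, forall x, u x = 0 /\ v x = 0}.
Proof.
apply: theta0_ae_fst.
  rewrite -[X in measurable X]/(u @^-1` [set 0] `&` v @^-1` [set 0]).
  apply: measurableI; rewrite -[X in measurable X]setTI;
    [exact: mu | exact: mv]; exact: measurable_set1.
have mfst (f : IZ -> R) :
  measurable_fun setT f -> measurable_fun setT (fun z : IZ * IN => f z.1).
  by move=> mf; exact: measurableT_comp mf measurable_fst.
have mbin : measurable_fun setT (fun z : IZ * IN => binangle R n z.2).
  exact: measurableT_comp (@measurable_binangle R n) measurable_snd.
have re0 := twisted_ae0 (measurable_twist_re mbin (mfst _ mu) (mfst _ mv))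
  (@twist_re_periodic R) (@twist_reDpi R) (@twist_re_rotate R).
have im0 := twisted_ae0 (measurable_twist_im mbin (mfst _ mu) (mfst _ mv))
  (@twist_im_periodic R) (@twist_imDpi R) (@twist_im_rotate R).
apply: filterS3 ae_G re0 im0 => -[x a] /= Gx.
by rewrite /twisted /= indicE mem_set // !mul1r; exact: twist_eq0.
Qed.

End eigenfunction.

Theorem lemma8 (R : realType) (m : probability IN R)
  (Hm : is_uniform_bernoulli m) (k : nat) (eta : probability IZ R)
  (Hinv : forall A : set IZ, measurable A ->
     eta (preimage (iter (2 ^ k)%N bshift) A) = eta A)
  (Herg : ergodic (D_meas m k eta) SxO) :
  forall n : nat, (k < n)%N ->
    ~ L2_eigenvalue (theta0 (D_meas m k eta)) bshift
        (cos (2 * pi / (2 ^ n)%N%:R)) (sin (2 * pi / (2 ^ n)%N%:R)).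
Proof.
move=> n kn [u [v [mu mv _ nonzero [N [mN N0 not_eigen_N]]]]]; apply: nonzero.
apply: (eigenfunction_ae0 Hm Herg kn mu mv mN N0) => x Nx.
by apply: contrapT => /not_eigen_N.
Qed.
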